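(* Let $L:G\to\mathcal{L}$ be a labeling function on a finite abelian group $G$. If $L$ is $3$-friendly, then $L$ is friendly, i.e. $m$-friendly for every $m\ge 3$.
   Context: Let $G$ be a finite abelian group written additively, $\mathcal{L}$ a finite set, and $L:G\to\mathcal{L}$ any function. For $m\ge3$ let $Z_m=\{(g_1,\dots,g_m)\in G^m: g_1+\cdots+g_{m-1}=g_m\}$, let $\widetilde{L}:Z_m\to\mathcal{L}^m$ be $\widetilde L(g_1,\dots,g_m)=(L(g_1),\dots,L(g_m))$, and let $\pi_i:G^m\to G$ be the $i$-th coordinate projection. $L$ is called $m$-friendly if for every $l=(l_1,\dots,l_m)\in\widetilde{L}(Z_m)$ and every $i=1,\dots,m$ one has $\pi_i(\widetilde{L}^{-1}(l))=L^{-1}(l_i)$. $L$ is friendly if it is $m$-friendly for all $m\ge3$. *)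

From HB Require Import structures.
From mathcomp Require Import all_boot all_order all_algebra all_fingroup.
Set Implicit Arguments. Unset Strict Implicit. Unset Printing Implicit Defensive.
Import GRing.Theory.
Local Open Scope ring_scope.

(* Z_m = {(g_1..g_m) : g_1 + ... + g_{m-1} = g_m}, as m-tuples (0-indexed). *)
Definition Zm (G : finZmodType) (m : nat) : {set m.-tuple G} :=
  [set g : m.-tuple G |
     (\sum_(i < m | (i < m.-1)%N) tnth g i) == nth 0 g m.-1].

Definition Ltil (G : finZmodType) (Lab : finType) (L : G -> Lab) (m : nat)
  (g : m.-tuple G) : m.-tuple Lab := map_tuple L g.

Definition m_friendly (G : finZmodType) (Lab : finType) (L : G -> Lab) (m : nat)
  : Prop :=
  forall l : m.-tuple Lab, l \in [set Ltil L g | g in Zm G m] ->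
  forall i : 'I_m,
    [set tnth g i | g in [set g in Zm G m | Ltil L g == l]]
    = [set x : G | L x == tnth l i].

Definition friendly (G : finZmodType) (Lab : finType) (L : G -> Lab) : Prop :=
  forall m : nat, (3 <= m)%N -> m_friendly L m.

From mathcomp Require Import all_boot all_order all_algebra all_fingroup.
Set Implicit Arguments. Unset Strict Implicit. Unset Printing Implicit Defensive.
Import GRing.Theory.
Local Open Scope ring_scope.

(* Encode (g_0, ..., g_n) with g_0 + ... + g_(n-1) = g_n as f : nat -> G.
   m-friendliness says exactly that any single entry of such a solution may be
   replaced by any element with the same label, the other entries being
   re-chosen within their label classes.  This lifting property propagates
   from n to n + 1: a solution of length n + 1 splits into a solution of
   length n ending with s = g_0 + ... + g_(n-1) and the length-2 solution
   s + g_n = g_(n+1); lift the part containing the prescribed entry first,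
   then lift the other part at its shared entry s, and glue. *)

Section Friendly.
Variables (G : finZmodType) (Lab : finType) (L : G -> Lab).

Definition sum_eqn n (f : nat -> G) := \sum_(j < n) f j = f n.

Definition same_labels n (f h : nat -> G) :=
  forall j, (j <= n)%N -> L (h j) = L (f j).

Definition label_lifting n := forall f, sum_eqn n f ->
  forall i, (i <= n)%N -> forall x, L x = L (f i) ->
  exists2 h, sum_eqn n h & same_labels n f h /\ h i = x.

Lemma nth_mktuple_nat m (f : nat -> G) k : (k < m)%N ->
  nth 0 [tuple f (val j) | j < m] k = f k.
Proof. by move=> lt_km; rewrite -[k]/(val (Ordinal lt_km)) nth_mktuple. Qed.

Lemma mem_Zm n (t : n.+1.-tuple G) :
  (t \in Zm G n.+1) = (\sum_(i < n) nth 0 t i == nth 0 t n).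
Proof.
rewrite inE /=; congr (_ == _).
rewrite big_mkcond big_ord_recr /= ltnn addr0.
by apply: eq_bigr => i _; rewrite ltn_ord (tnth_nth 0).
Qed.

Lemma m_friendly_lifting n : m_friendly L n.+1 -> label_lifting n.
Proof.
move=> frL f f_sol i le_in x Lx.
pose g := [tuple f (val j) | j < n.+1].
have gZ : g \in Zm G n.+1.
  rewrite mem_Zm nth_mktuple_nat // -f_sol.
  by apply/eqP; apply: eq_bigr => j _; rewrite nth_mktuple_nat // leqW.
have inord_i : val (@inord n i) = i by rewrite /= inordK ?ltnS.
have /setP/(_ x) := frL _ (imset_f _ gZ) (inord i).
rewrite inE tnth_map tnth_mktuple inord_i -Lx eqxx.
case/imsetP => g'; rewrite inE => /andP[g'Z /eqP Lg'] ->.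
exists (nth 0 g'); first by move: g'Z; rewrite mem_Zm => /eqP.
split; last by rewrite (tnth_nth 0) inord_i.
move=> j le_jn; have := congr1 (fun t => tnth t (inord j)) Lg'.
by rewrite !tnth_map tnth_ord_tuple (tnth_nth 0) /= inordK ?ltnS.
Qed.

Lemma lifting_m_friendly n : label_lifting n -> m_friendly L n.+1.
Proof.
move=> liftL l /imsetP[g0 g0Z ->] i.
apply/setP => x; rewrite inE; apply/imsetP/eqP.
  by case=> g; rewrite inE => /andP[_ /eqP <-] ->; rewrite tnth_map.
rewrite tnth_map (tnth_nth 0) => Lx.
move: g0Z; rewrite mem_Zm => /eqP g0_sol.
have [h h_sol [Lh hi]] := liftL _ g0_sol i (ltn_ord i) x Lx.
exists [tuple h (val j) | j < n.+1]; last by rewrite tnth_mktuple.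
rewrite inE mem_Zm nth_mktuple_nat // -h_sol; apply/andP; split.
  by apply/eqP; apply: eq_bigr => j _; rewrite nth_mktuple_nat // leqW.
apply/eqP; apply: eq_from_tnth => j.
by rewrite !tnth_map tnth_ord_tuple [in RHS](tnth_nth 0) Lh // -ltnS ltn_ord.
Qed.

Definition head_part n (f : nat -> G) j :=
  if j == n then \sum_(k < n) f k else f j.

Definition tail_part n (f : nat -> G) j :=
  if j == 0%N then \sum_(k < n) f k else f (j.-1 + n)%N.

Definition glue n (h k : nat -> G) j :=
  if (j < n)%N then h j else k (j - n).+1.

Lemma head_part_sol n f : sum_eqn n (head_part n f).
Proof.
rewrite /sum_eqn /head_part eqxx.
by apply: eq_bigr => j _; rewrite ltn_eqF.
Qed.

Lemma tail_part_sol n f : sum_eqn n.+1 f -> sum_eqn 2 (tail_part n f).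
Proof.
by rewrite /sum_eqn !big_ord_recr big_ord0 /= add0r /tail_part /= => <-.
Qed.

Lemma glue_sol n h k :
  sum_eqn n h -> sum_eqn 2 k -> k 0%N = h n -> sum_eqn n.+1 (glue n h k).
Proof.
rewrite /sum_eqn => h_sol k_sol k0.
rewrite !big_ord_recr big_ord0 /= add0r in k_sol.
rewrite /glue big_ord_recr /= ltnn ltnNge leqnSn subnn subSnn -k_sol k0 -h_sol.
by congr (_ + _); apply: eq_bigr => j _; rewrite ltn_ord.
Qed.

Lemma glue_same_labels n f h k :
  same_labels n (head_part n f) h -> same_labels 2 (tail_part n f) k ->
  same_labels n.+1 f (glue n h k).
Proof.
move=> Lh Lk j le_jn1; rewrite /glue.
case: ltnP => [lt_jn | le_nj].
  by rewrite Lh 1?ltnW // /head_part ltn_eqF.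
rewrite Lk; last by rewrite ltnS leq_subLR addn1.
by rewrite /tail_part /= subnK.
Qed.

Lemma label_lifting_succ n :
  label_lifting 2 -> label_lifting n -> label_lifting n.+1.
Proof.
move=> lift2 liftn f f_sol i le_in1 x Lx.
have shared : head_part n f n = tail_part n f 0 by rewrite /head_part eqxx.
have [lt_in | le_ni] := ltnP i n.
  have Lx' : L x = L (head_part n f i) by rewrite /head_part ltn_eqF.
  have [h h_sol [Lh hi]] := liftn _ (head_part_sol n f) i (ltnW lt_in) x Lx'.
  have Lhn : L (h n) = L (tail_part n f 0) by rewrite Lh // shared.
  have [k k_sol [Lk k0]] := lift2 _ (tail_part_sol f_sol) 0 isT _ Lhn.
  exists (glue n h k); first exact: glue_sol.
  by split; [exact: glue_same_labels | rewrite /glue lt_in].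
have le_i'2 : ((i - n).+1 <= 2)%N by rewrite ltnS leq_subLR addn1.
have Lx' : L x = L (tail_part n f (i - n).+1) by rewrite /tail_part /= subnK.
have [k k_sol [Lk ki]] := lift2 _ (tail_part_sol f_sol) _ le_i'2 x Lx'.
have Lk0 : L (k 0%N) = L (head_part n f n) by rewrite Lk // shared.
have [h h_sol [Lh hn]] := liftn _ (head_part_sol n f) n (leqnn n) _ Lk0.
exists (glue n h k); first exact: glue_sol.
by split; [exact: glue_same_labels | rewrite /glue ltnNge le_ni].
Qed.

End Friendly.

Theorem lemma3p5 (G : finZmodType) (Lab : finType) (L : G -> Lab) :
  m_friendly L 3 -> friendly L.
Proof.
move=> frL3 [|[|[|m]]] // _.
have lift2 := m_friendly_lifting frL3.
apply: lifting_m_friendly.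
by elim: m => // m IHm; apply: label_lifting_succ.
Qed.
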